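(* Let $q_1(x),q_2(x)\in\mathbb{R}[x]$ be two monic quadratic polynomials neither of which is the square of a linear polynomial, and let $I\subseteq\mathbb{R}$ be the largest (infinite) interval on which both $q_1$ and $q_2$ are non-negative. Let $P_1,P_2,P_3,P_4\in\mathbb{R}[x]$ with $C:=\max\{\deg P_j:1\le j\le4\}\ge0$, and put $$P(x)=P_1(x)+P_2(x)\sqrt{q_1(x)}+P_3(x)\sqrt{q_2(x)}+P_4(x)\sqrt{q_1(x)q_2(x)}.$$ Then the equation $P(x)=0$ has at most $4(C+2)$ roots in $I$, unless $q_1=q_2$ and both $P_2+P_3$ and $P_1+q_1P_4$ are the zero polynomial, in which case $P(x)=0$ for every $x\in I$.
   Context: The zero polynomial is assigned degree $-1$. *)

From HB Require Import structures.
From mathcomp Require Import all_boot all_order all_algebra.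
From mathcomp Require Import reals.
Set Implicit Arguments. Unset Strict Implicit. Unset Printing Implicit Defensive.
Import Order.TTheory GRing.Theory Num.Theory.
Local Open Scope ring_scope.

Definition square_of_linear (R : realType) (q : {poly R}) : Prop :=
  exists l : {poly R}, size l = 2%N /\ q = l ^+ 2.

Definition unbounded_itv (R : realType) (I : interval R) : Prop :=
  (forall M : R, exists2 x, x \in I & M < x) \/
  (forall M : R, exists2 x, x \in I & x < M).

Definition both_nonneg_on (R : realType) (q1 q2 : {poly R}) (I : interval R) : Prop :=
  forall x, x \in I -> 0 <= q1.[x] /\ 0 <= q2.[x].

Definition largest_nonneg_itv (R : realType) (q1 q2 : {poly R}) (I : interval R) : Prop :=
  [/\ unbounded_itv I, both_nonneg_on q1 q2 I &
      forall J : interval R, unbounded_itv J -> both_nonneg_on q1 q2 J ->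
        {subset I <= J} -> {subset J <= I}].

Definition Pfun (R : realType) (q1 q2 P1 P2 P3 P4 : {poly R}) (x : R) : R :=
  P1.[x] + P2.[x] * Num.sqrt q1.[x] + P3.[x] * Num.sqrt q2.[x]
  + P4.[x] * Num.sqrt (q1.[x] * q2.[x]).

(* degree with the convention deg 0 = -1 ; here as an int *)
Definition pdeg (R : realType) (p : {poly R}) : int := (size p)%:Z - 1.

Definition Cmax (R : realType) (P1 P2 P3 P4 : {poly R}) : int :=
  Num.max (Num.max (pdeg P1) (pdeg P2)) (Num.max (pdeg P3) (pdeg P4)).

Definition at_most_roots_in (R : realType) (f : R -> R) (I : interval R) (N : int) : Prop :=
  forall s : seq R, uniq s -> (forall x, x \in s -> x \in I /\ f x = 0) ->
    (size s)%:Z <= N.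

From HB Require Import structures.
From mathcomp Require Import all_boot all_order all_algebra.
From mathcomp Require Import reals complex.
From mathcomp Require Import ring zify.
Set Implicit Arguments. Unset Strict Implicit. Unset Printing Implicit Defensive.
Import Order.TTheory GRing.Theory Num.Theory.
Local Open Scope ring_scope.

(* Write s1, s2 for the square roots of q1, q2.  A zero of P in I is a root of
   the product Q of the four conjugates P1 +- P2 s1 +- P3 s2 +- P4 s1 s2, a
   polynomial of degree at most 4(C+2); when q1 = q2 the radicals coincide and
   the norm of (P1 + q1 P4) + (P2 + P3) s1 already does.  It remains to show
   that Q <> 0 outside the exceptional case.  Over C a monic quadratic that is
   not a square has two simple roots, so comparing parities of multiplicities,
   U^2 = q V^2 forces V = 0 and q1 B^2 = q2 N^2 with N <> 0 forces q1 = q2;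
   together these exclude every way for the norm to vanish. *)

Section Multiplicity.
Variable F : fieldType.
Implicit Types (a b c : F) (B N : {poly F}).

Lemma mup_mul_XsubC a b c :
  mup c (('X - a%:P) * ('X - b%:P)) = ((a == c) + (b == c))%N.
Proof.
by rewrite mupM ?polyXsubC_eq0 // -[_ - a%:P]expr1 -[_ - b%:P]expr1 !mup_XsubCX.
Qed.

Lemma odd_mup_mul_sqr q1 q2 B N c : q2 != 0 -> N != 0 ->
  q1 * (B * B) = q2 * (N * N) -> odd (mup c q1) = odd (mup c q2).
Proof.
move=> nz_q2 nz_N E.
have nz_rhs : q2 * (N * N) != 0 by rewrite !mulf_neq0.
have [nz_q1 nz_BB] : q1 != 0 /\ B * B != 0.
  by move: nz_rhs; rewrite -E mulf_eq0 negb_or => /andP.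
have nz_B : B != 0 by apply: contraNneq nz_BB => ->; rewrite mul0r.
move/(congr1 (mup c)): E.
rewrite !mupM ?mulf_neq0 // !addnn => /(congr1 odd).
by rewrite !oddD !odd_double !addbF.
Qed.

End Multiplicity.

Section Norm.
Variable T : comPzRingType.
Implicit Types q s a b c e : T.

Definition norm2 q a b : T := a * a - q * (b * b).

(* [elim_re + elim_im * s1] is the norm of [a + b s1 + (c + e s1) s2] down
   to the ring generated by [s1] (lemma [norm2_sqr_elim]). *)
Definition elim_re (q1 q2 : T) a b c e : T :=
  a * a + q1 * (b * b) - q2 * (c * c) - q1 * q2 * (e * e).
Definition elim_im (q2 : T) a b c e : T := (a * b - q2 * (c * e)) *+ 2.
Definition elim_norm (q1 q2 : T) a b c e : T :=
  norm2 q1 (elim_re q1 q2 a b c e) (elim_im q2 a b c e).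

Lemma norm2_sqr s a b : norm2 (s ^+ 2) a b = (a + b * s) * (a - b * s).
Proof. by rewrite /norm2; ring. Qed.

Lemma norm2_sqr_eq0 s a b : a + b * s = 0 -> norm2 (s ^+ 2) a b = 0.
Proof. by move=> h; rewrite norm2_sqr h mul0r. Qed.

Lemma norm2_sqr_elim (s1 s2 : T) a b c e :
  norm2 (s2 ^+ 2) (a + b * s1) (c + e * s1) =
  elim_re (s1 ^+ 2) (s2 ^+ 2) a b c e + elim_im (s2 ^+ 2) a b c e * s1.
Proof. by rewrite /norm2 /elim_re /elim_im; ring. Qed.

Lemma elim_norm_sqr_eq0 (s1 s2 : T) a b c e :
  a + b * s1 + c * s2 + e * (s1 * s2) = 0 ->
  elim_norm (s1 ^+ 2) (s2 ^+ 2) a b c e = 0.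
Proof.
move=> h; apply/norm2_sqr_eq0; rewrite -norm2_sqr_elim; apply/norm2_sqr_eq0.
by rewrite -h; ring.
Qed.
End Norm.

Section NonsquareQuadratic.
Variable R : realType.
Implicit Types q U V B N : {poly R}.
Local Notation toC := (map_poly (real_complex R)).

Definition nonsquare_monic_quadratic q : Prop :=
  [/\ q \is monic, size q = 3%N & ~ square_of_linear q].

Lemma nonsquare_quadratic_split q : nonsquare_monic_quadratic q ->
  exists a b : R[i], a != b /\ toC q = ('X - a%:P) * ('X - b%:P).
Proof.
case=> mon_q size_q nsq_q.
have two_neq0 (K : numFieldType) : 2 != 0 :> K by rewrite pnatr_eq0.
set D := q`_1 ^+ 2 - 4 * q`_0.
have nz_D : D != 0.
  apply: contra_notN nsq_q => /eqP D0.
  exists ('X + (q`_1 / 2)%:P); split; first exact: size_XaddC.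
  rewrite {1}(FieldMonic.deg2_poly_canonical (two_neq0 R) size_q mon_q).
  by rewrite -/D D0 mul0r subr0.
set r := sqrtC (real_complex R D).
have r2 : r ^+ 2 = (toC q)`_1 ^+ 2 - 4 * (toC q)`_0.
  by rewrite sqrtCK !coef_map /= rmorphB rmorphXn rmorphM /= rmorph_nat.
have nz_r : r != 0.
  apply: contra_neq nz_D => r0; apply: (@fmorph_inj _ _ (real_complex R)).
  by rewrite rmorph0 -[LHS]sqrtCK -/r r0 expr0n.
exists ((- (toC q)`_1 - r) / 2), ((- (toC q)`_1 + r) / 2); split.
  apply: contra_neq nz_r => /(congr1 (fun z => z * 2)); rewrite !divfK ?two_neq0 //.
  by move/addrI/eqP; rewrite eq_sym -addr_eq0 -mulr2n mulrn_eq0 => /eqP.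
apply: FieldMonic.deg2_poly_factor; rewrite ?two_neq0 ?map_monic //.
by rewrite size_map_poly.
Qed.

Lemma nonsquare_sqr_eq_mul_sqr q U V : nonsquare_monic_quadratic q ->
  U * U = q * (V * V) -> V = 0.
Proof.
move=> /[dup] [[mon_q _ _]] /nonsquare_quadratic_split [a [b [neq_ab Eq]]] E.
apply/eqP/negPn/negP => nz_V.
have EC : 1 * (toC U * toC U) = toC q * (toC V * toC V).
  by rewrite mul1r -!rmorphM E.
have := odd_mup_mul_sqr a _ _ EC.
rewrite !map_poly_eq0 monic_neq0 // nz_V => /(_ isT isT).
rewrite Eq mup_mul_XsubC eqxx eq_sym (negPf neq_ab).
by rewrite -(expr0 ('X - a%:P)) mup_XsubCX eqxx.
Qed.

Lemma nonsquare_mul_sqr_eq q1 q2 B N :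
  nonsquare_monic_quadratic q1 -> q2 \is monic -> size q2 = 3%N -> N != 0 ->
  q1 * (B * B) = q2 * (N * N) -> q1 = q2.
Proof.
move=> nsq1 mon_q2 size_q2 nz_N E.
have [a [b [neq_ab Eq1]]] := nonsquare_quadratic_split nsq1.
have nz_q2 : toC q2 != 0 by rewrite map_poly_eq0 monic_neq0.
have EC : toC q1 * (toC B * toC B) = toC q2 * (toC N * toC N).
  by rewrite -!rmorphM E.
have root_q2 c : c \in [:: a; b] -> root (toC q2) c.
  move=> c_ab; have := odd_mup_mul_sqr c nz_q2 _ EC.
  rewrite map_poly_eq0 nz_N Eq1 mup_mul_XsubC => /(_ isT).
  have -> : ((a == c) + (b == c) = 1)%N.
    case/predU1P: c_ab => [|/predU1P [|//]] ->;
    by rewrite eqxx ?[b == a]eq_sym (negPf neq_ab).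
  by rewrite -dvdp_XsubCl XsubC_dvd //; case: mup.
apply: (@map_poly_inj _ _ (real_complex R)); rewrite Eq1.
apply/eqP; rewrite -eqp_monic ?map_monic ?monicMl ?monicXsubC // -dvdp_size_eqp.
  by rewrite size_map_poly size_q2 size_mul ?polyXsubC_eq0 // !size_XsubC.
have := uniq_roots_dvdp (rs := [:: a; b]) (p := toC q2).
rewrite !big_cons big_nil mulr1; apply; first by apply/allP => c /root_q2.
by rewrite /= andbT /diff_roots mulrC eqxx unitfE subr_eq0 eq_sym neq_ab.
Qed.

Lemma norm2_eq0 q (a b : {poly R}) : nonsquare_monic_quadratic q ->
  norm2 q a b = 0 -> a = 0 /\ b = 0.
Proof.
move=> nsq /eqP; rewrite subr_eq0 => /eqP E.
have b0 := nonsquare_sqr_eq_mul_sqr nsq E; split=> //.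
by move/eqP: E; rewrite b0 !mulr0 mulf_eq0 orbb => /eqP.
Qed.

Lemma elim_re_im_eq0 (q1 q2 P1 P2 P3 P4 : {poly R}) :
  nonsquare_monic_quadratic q1 -> nonsquare_monic_quadratic q2 -> q1 != q2 ->
  elim_re q1 q2 P1 P2 P3 P4 = 0 -> P1 * P2 = q2 * (P3 * P4) ->
  [/\ P1 = 0, P2 = 0, P3 = 0 & P4 = 0].
Proof.
(* With x = P1 + P2 s1 and y = P3 + P4 s1 the hypotheses say x^2 = q2 y^2;
   then al + be s1 = x (P3 - P4 s1) satisfies (al + be s1)^2 = q2 n^2. *)
move=> nsq1 nsq2 neq_q12 U0 /eqP; rewrite -subr_eq0 => /eqP V0.
set n := norm2 q1 P3 P4.
set al := P1 * P3 - q1 * (P2 * P4).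
set be := P2 * P3 - P1 * P4.
have al_be : al * be = 0.
  transitivity ((P1 * P2 - q2 * (P3 * P4)) * (P3 * P3 + q1 * (P4 * P4)) -
                P3 * P4 * elim_re q1 q2 P1 P2 P3 P4).
    by rewrite /al /be /elim_re; ring.
  by rewrite U0 V0; ring.
have norm_al_be : al * al + q1 * (be * be) = q2 * (n * n).
  apply/eqP; rewrite -subr_eq0; apply/eqP.
  transitivity (elim_re q1 q2 P1 P2 P3 P4 * (P3 * P3 + q1 * (P4 * P4)) -
                4%:R * q1 * P3 * P4 * (P1 * P2 - q2 * (P3 * P4))).
    by rewrite /al /be /n /norm2 /elim_re; ring.
  by rewrite U0 V0; ring.
have [n0 | nz_n] := eqVneq n 0.
  have [P30 P40] := norm2_eq0 nsq1 n0.
  move: U0 V0; rewrite /elim_re P30 P40 !(mul0r, mulr0, subr0) => U0 /eqP.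
  rewrite mulf_eq0 => /orP [] /eqP P0;
    move: U0; rewrite P0 !(mul0r, mulr0, add0r, addr0).
    have [/monic_neq0 /negPf nz_q1 _ _] := nsq1.
    by move/eqP; rewrite !mulf_eq0 orbb nz_q1 => /eqP.
  by move/eqP; rewrite mulf_eq0 orbb => /eqP.
exfalso; move/eqP: al_be; rewrite mulf_eq0 => /orP [] /eqP ab0;
  move: norm_al_be; rewrite ab0 !(mul0r, mulr0, add0r, addr0).
  have [mon_q2 size_q2 _] := nsq2.
  move/(nonsquare_mul_sqr_eq nsq1 mon_q2 size_q2 nz_n) => eq_q12.
  by rewrite eq_q12 eqxx in neq_q12.
by move/(nonsquare_sqr_eq_mul_sqr nsq2) => n0; rewrite n0 eqxx in nz_n.
Qed.

Lemma elim_norm_eq0 (q1 q2 P1 P2 P3 P4 : {poly R}) :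
  nonsquare_monic_quadratic q1 -> nonsquare_monic_quadratic q2 -> q1 != q2 ->
  elim_norm q1 q2 P1 P2 P3 P4 = 0 -> [/\ P1 = 0, P2 = 0, P3 = 0 & P4 = 0].
Proof.
move=> nsq1 nsq2 neq_q12 /(norm2_eq0 nsq1) [U0 /eqP W0].
apply: (elim_re_im_eq0 nsq1 nsq2 neq_q12 U0); apply/eqP; rewrite -subr_eq0.
move: W0; rewrite /elim_im -mulr_natl mulf_eq0 => /orP [|//].
by rewrite -polyC_natr polyC_eq0 pnatr_eq0.
Qed.

End NonsquareQuadratic.

Section Horner.
Variable R : realType.

Lemma horner_elim_norm (q1 q2 P1 P2 P3 P4 : {poly R}) x :
  (elim_norm q1 q2 P1 P2 P3 P4).[x] =
  elim_norm q1.[x] q2.[x] P1.[x] P2.[x] P3.[x] P4.[x].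
Proof.
by rewrite /elim_norm /norm2 /elim_re /elim_im !(hornerD, hornerN, hornerM, hornerMn).
Qed.

Lemma root_elim_norm (q1 q2 P1 P2 P3 P4 : {poly R}) x :
  0 <= q1.[x] -> 0 <= q2.[x] ->
  Pfun q1 q2 P1 P2 P3 P4 x = 0 -> root (elim_norm q1 q2 P1 P2 P3 P4) x.
Proof.
move=> q1x_ge0 q2x_ge0; rewrite /Pfun sqrtrM // => P0.
rewrite /root horner_elim_norm.
by rewrite -(sqr_sqrtr q1x_ge0) -(sqr_sqrtr q2x_ge0) elim_norm_sqr_eq0.
Qed.

Lemma root_norm2_diag (q P1 P2 P3 P4 : {poly R}) x : 0 <= q.[x] ->
  Pfun q q P1 P2 P3 P4 x = 0 -> root (norm2 q (P1 + q * P4) (P2 + P3)) x.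
Proof.
move=> qx_ge0; rewrite /Pfun sqrtrM // => P0.
rewrite /root /norm2 !(hornerD, hornerN, hornerM) -(sqr_sqrtr qx_ge0).
by rewrite -/(norm2 _ _ _); apply/eqP/norm2_sqr_eq0; rewrite -P0; ring.
Qed.

Lemma Pfun_diag_eq0 (q P1 P2 P3 P4 : {poly R}) x : 0 <= q.[x] ->
  P2 + P3 = 0 -> P1 + q * P4 = 0 -> Pfun q q P1 P2 P3 P4 x = 0.
Proof.
move=> qx_ge0 /(congr1 (horner^~ x)) P23 /(congr1 (horner^~ x)) P14.
move: P23 P14; rewrite /Pfun sqrtrM // !(hornerD, hornerM, horner0).
rewrite -expr2 sqr_sqrtr // => /eqP; rewrite addrC addr_eq0 => /eqP ->.
by move/eqP; rewrite addr_eq0 => /eqP ->; ring.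
Qed.
End Horner.

Section DegreeBound.
Variable R : realType.
Implicit Types p r : {poly R}.

Definition deg_le p (n : nat) : Prop := (size p <= n.+1)%N.

Lemma deg_leW p m n : deg_le p m -> (m <= n)%N -> deg_le p n.
Proof. by rewrite /deg_le; lia. Qed.

Lemma deg_leD p r m n : deg_le p m -> deg_le r n -> deg_le (p + r) (maxn m n).
Proof. by rewrite /deg_le => hp hr; apply: leq_trans (size_polyD _ _) _; lia. Qed.

Lemma deg_leN p n : deg_le p n -> deg_le (- p) n.
Proof. by rewrite /deg_le size_polyN. Qed.

Lemma deg_leMn p n k : deg_le p n -> deg_le (p *+ k) n.
Proof.
move=> hp; elim: k => [|k IH]; first by rewrite mulr0n /deg_le size_poly0.
by rewrite mulrS -[n]maxnn; apply: deg_leD.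
Qed.

Lemma deg_leM p r m n : deg_le p m -> deg_le r n -> deg_le (p * r) (m + n).
Proof. by rewrite /deg_le => hp hr; apply: leq_trans (size_polyMleq _ _) _; lia. Qed.

Ltac deg_le_bound :=
  apply: deg_leW;
  [repeat first [apply: deg_leD | apply: deg_leN | apply: deg_leM | apply: deg_leMn
                | eassumption] | lia].

Lemma deg_le_elim_norm (q1 q2 P1 P2 P3 P4 : {poly R}) k :
  deg_le q1 2 -> deg_le q2 2 ->
  deg_le P1 k -> deg_le P2 k -> deg_le P3 k -> deg_le P4 k ->
  deg_le (elim_norm q1 q2 P1 P2 P3 P4) (4 * k + 8).
Proof. by rewrite /elim_norm /norm2 /elim_re /elim_im => *; deg_le_bound. Qed.

Lemma deg_le_norm2_diag (q P1 P2 P3 P4 : {poly R}) k :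
  deg_le q 2 -> deg_le P1 k -> deg_le P2 k -> deg_le P3 k -> deg_le P4 k ->
  deg_le (norm2 q (P1 + q * P4) (P2 + P3)) (2 * k + 4).
Proof. by rewrite /norm2 => *; deg_le_bound. Qed.

Lemma deg_le_Cmax (P1 P2 P3 P4 : {poly R}) (k : nat) : Cmax P1 P2 P3 P4 = k%:Z ->
  [/\ deg_le P1 k, deg_le P2 k, deg_le P3 k & deg_le P4 k].
Proof.
move=> Ck; have le_k p : pdeg p <= Cmax P1 P2 P3 P4 -> deg_le p k.
  by rewrite Ck /pdeg /deg_le; lia.
by split; apply: le_k; rewrite /Cmax !le_max lexx ?orbT.
Qed.

Lemma Cmax_ge0_neq0 (P1 P2 P3 P4 : {poly R}) : 0 <= Cmax P1 P2 P3 P4 ->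
  ~ [/\ P1 = 0, P2 = 0, P3 = 0 & P4 = 0].
Proof.
move=> C0 [P10 P20 P30 P40]; move: C0.
by rewrite /Cmax /pdeg P10 P20 P30 P40 size_poly0 !maxxx.
Qed.

Lemma at_most_roots_in_poly (f : R -> R) (I : interval R) (Q : {poly R}) n :
  Q != 0 -> deg_le Q n -> (forall x, x \in I -> f x = 0 -> root Q x) ->
  at_most_roots_in f I n.
Proof.
move=> nz_Q deg_Q rootQ s uniq_s roots_s; rewrite lez_nat -ltnS.
apply: leq_trans (max_poly_roots nz_Q _ uniq_s) deg_Q.
by apply/allP => x /roots_s [xI fx0]; apply: rootQ.
Qed.

End DegreeBound.

Theorem theorem5p1 (R : realType) (q1 q2 P1 P2 P3 P4 : {poly R}) (I : interval R) :
  q1 \is monic -> size q1 = 3%N -> ~ square_of_linear q1 ->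
  q2 \is monic -> size q2 = 3%N -> ~ square_of_linear q2 ->
  largest_nonneg_itv q1 q2 I ->
  0 <= Cmax P1 P2 P3 P4 ->
  (~ (q1 = q2 /\ P2 + P3 = 0 /\ P1 + q1 * P4 = 0) ->
     at_most_roots_in (Pfun q1 q2 P1 P2 P3 P4) I (4 * (Cmax P1 P2 P3 P4 + 2))) /\
  ((q1 = q2 /\ P2 + P3 = 0 /\ P1 + q1 * P4 = 0) ->
     forall x, x \in I -> Pfun q1 q2 P1 P2 P3 P4 x = 0).
Proof.
move=> mon1 size1 nsq1 mon2 size2 nsq2 [_ nonneg _] C0.
have nsq_q1 : nonsquare_monic_quadratic q1 by [].
have nsq_q2 : nonsquare_monic_quadratic q2 by [].
split=> [not_exc | [<- [P23 P14]] x /nonneg [q1x_ge0 _]]; last exact: Pfun_diag_eq0.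
have [k Ck] : exists k : nat, Cmax P1 P2 P3 P4 = k%:Z.
  by exists `|Cmax P1 P2 P3 P4|%N; rewrite gez0_abs.
have [deg1 deg2 deg3 deg4] := deg_le_Cmax Ck.
have deg_q1 : deg_le q1 2 by rewrite /deg_le size1.
have deg_q2 : deg_le q2 2 by rewrite /deg_le size2.
have -> : 4 * (Cmax P1 P2 P3 P4 + 2) = (4 * k + 8)%N :> int by rewrite Ck; lia.
have [eq_q12 | neq_q12] := eqVneq q1 q2.
  subst q2; apply: (at_most_roots_in_poly (Q := norm2 q1 (P1 + q1 * P4) (P2 + P3))).
  - by apply/eqP => /(norm2_eq0 nsq_q1) [P14 P23]; apply: not_exc.
  - by apply: deg_leW (deg_le_norm2_diag deg_q1 deg1 deg2 deg3 deg4) _; lia.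
  - by move=> x /nonneg [q1x_ge0 _]; apply: root_norm2_diag.
apply: (at_most_roots_in_poly (Q := elim_norm q1 q2 P1 P2 P3 P4)).
- by apply/eqP => /(elim_norm_eq0 nsq_q1 nsq_q2 neq_q12); apply: Cmax_ge0_neq0.
- exact: deg_le_elim_norm.
- by move=> x /nonneg [q1x_ge0 q2x_ge0]; apply: root_elim_norm.
Qed.
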